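(* There is a universal constant $C>0$ such that the following holds. Let $n,k,d$ be positive integers with $n\ge 3k$ and suppose $\mathsf{m}^{rd}(d,S_{n,k})>0$. Then $$d\ \ge\ C\,\frac{k\log(n/k)}{\log\bigl(1+2(\mathsf{m}^{rd}(d,S_{n,k})\sqrt{k})^{-1}\bigr)}.$$
   Context: $S_{n,k}\in\{0,1\}^{\binom{n}{k}\times n}$ is the matrix whose rows are all the distinct vectors in $\{0,1\}^n$ with exactly $k$ ones, each appearing exactly once. For $A\in\{0,1\}^{N\times n}$ and $m\ge 0$, unit vectors $U_1,\dots,U_N,V_1,\dots,V_n\in\mathbb{R}^d$ form a margin-$m$, relative-bias-$0$ embedding of $A$ in dimension $d$ if $\langle U_j,V_i\rangle\ge m$ whenever $A_{ji}=1$ and $\langle U_j,V_i\rangle\le -m$ whenever $A_{ji}=0$. $\mathsf{m}^{rd}(d,A)$ is the supremum of $m\ge0$ for which such an embedding exists in dimension $d$ ($-\infty$ if none exists). *)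

From HB Require Import structures.
From mathcomp Require Import all_boot all_order all_algebra.
From mathcomp Require Import all_classical all_reals all_analysis.
From mathcomp Require Import Rstruct Rstruct_topology.
Set Implicit Arguments. Unset Strict Implicit. Unset Printing Implicit Defensive.
Import Order.TTheory GRing.Theory Num.Theory.
Local Open Scope ring_scope.

Definition RR := Rdefinitions.R.

Definition dotp (d : nat) (u v : 'I_d -> RR) : RR := \sum_(i < d) u i * v i.

Definition unitv (d : nat) (u : 'I_d -> RR) : Prop := dotp u u = 1.

(* A 0/1 matrix with rows indexed by a finite type I and n columns:
   A j i = true means entry 1.  Margin-m, relative-bias-0 embedding in dimension d. *)
Definition rd_embedding (I : finType) (n d : nat) (A : I -> 'I_n -> bool) (m : RR)
    (U : I -> 'I_d -> RR) (V : 'I_n -> 'I_d -> RR) : Prop :=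
  (forall j, unitv (U j)) /\ (forall i, unitv (V i)) /\
  (forall j i, if A j i then m <= dotp (U j) (V i) else dotp (U j) (V i) <= - m).

Definition rd_embeddable (I : finType) (n d : nat) (A : I -> 'I_n -> bool) (m : RR) : Prop :=
  exists U V, @rd_embedding I n d A m U V.

(* m^rd(d, A): supremum of admissible margins m >= 0 (ereal_sup of empty set is -oo) *)
Definition mrd (I : finType) (n d : nat) (A : I -> 'I_n -> bool) : \bar RR :=
  ereal_sup [set (m%:E) | m in [set m : RR | 0 <= m /\ rd_embeddable d A m]].

(* S_{n,k}: rows are all k-subsets of 'I_n, each once; entry (s,i) = 1 iff i \in s *)
Definition ksub (n k : nat) := {s : {set 'I_n} | #|s| == k}.

Definition Snk (n k : nat) : ksub n k -> 'I_n -> bool := fun s i => i \in val s.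

From mathcomp Require Import all_boot all_order all_algebra.
From mathcomp Require Import all_classical all_reals all_analysis.
From mathcomp Require Import Rstruct Rstruct_topology.
From mathcomp Require Import lra ring zify.
Import Order.TTheory GRing.Theory Num.Theory.
Set Implicit Arguments. Unset Strict Implicit. Unset Printing Implicit Defensive.
Local Open Scope ring_scope.

(* Let N = n %/ k >= 3. The rows of S_{n,k} that pick one column in each of k
   disjoint blocks of N columns are indexed by f : [k] -> [N], so an embedding
   of S_{n,k} restricts to an embedding of this product. Centre each block of
   column vectors, V'_{j,a} = V_{j,a} - mean_b V_{j,b}, and put
   y_f = sum_j V'_{j,f(j)}. The margin gives <U_f, y_f> >= 4km/3 and
   <U_f, y_f - y_g> >= 2m ham(f,g), while the centred blocks are orthogonal
   on average over f, so sum_f |y_f|^2 <= k N^k. Hence km^2 <= 9/16, and at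
   least half of the f are typical: |y_f|^2 <= 2k. Rounding the coordinates of
   the typical y_f to the grid of step km/(2 sqrt d) produces codes such that
   f and g with the same code satisfy 4 ham(f,g) <= k, and a weighted AM-GM
   count shows that there are at most (4 + 8 sigma)^d codes, sigma = 2 +
   16/(km^2). Comparing N^k <= 2 (4 + 8 sigma)^d (4N)^(k/4) (5/4)^k and taking
   logarithms gives k log N <= 80 d log(1 + 2/(m sqrt k)); finally m can be
   taken above half of m^rd(d, S_{n,k}). *)

Section InnerProduct.
Variable d : nat.
Implicit Types u x y : 'I_d -> RR.

Lemma dotp_ge0 x : 0 <= dotp x x.
Proof. by apply: sumr_ge0 => r _; rewrite -expr2 sqr_ge0. Qed.

Lemma dotpBr u x y : dotp u (fun r => x r - y r) = dotp u x - dotp u y.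
Proof. by rewrite /dotp -sumrB; apply: eq_bigr => r _; rewrite mulrBr. Qed.

Lemma dotpZr u x c : dotp u (fun r => c * x r) = c * dotp u x.
Proof. by rewrite /dotp mulr_sumr; apply: eq_bigr => r _; rewrite mulrCA. Qed.

Lemma dotp_sumr (I : finType) u (x : I -> 'I_d -> RR) :
  dotp u (fun r => \sum_i x i r) = \sum_i dotp u (x i).
Proof. by rewrite /dotp exchange_big; apply: eq_bigr => r _; rewrite mulr_sumr. Qed.

Lemma unitv_dotp_sqr_le u x : unitv u -> dotp u x ^+ 2 <= dotp x x.
Proof.
rewrite /unitv => hu.
have sq_ge0 t : 0 <= t ^+ 2 * dotp u u - 2 * t * dotp u x + dotp x x.
  rewrite (_ : _ - _ + _ = \sum_r (t * u r - x r) ^+ 2).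
    by apply: sumr_ge0 => r _; exact: sqr_ge0.
  rewrite /dotp !mulr_sumr -sumrB -big_split; apply: eq_bigr => r _ /=; ring.
by have := sq_ge0 (dotp u x); rewrite hu; lra.
Qed.

End InnerProduct.

Lemma rd_embedding_margin_le1 (I : finType) (n d : nat) (A : I -> 'I_n -> bool) m U V
    (j : I) (i : 'I_n) :
  @rd_embedding I n d A m U V -> m <= 1.
Proof.
case=> hU [hV hA]; have := unitv_dotp_sqr_le (V i) (hU j); rewrite hV.
by have := hA j i; case: (A j i) => sep_ji sqr_le; nra.
Qed.

(* [j] and [i] only witness a row and a column, which bound every margin by 1. *)
Lemma mrd_gt0_embeddable (I : finType) (n d : nat) (A : I -> 'I_n -> bool)
    (j : I) (i : 'I_n) :
  (0 < mrd d A)%E ->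
  0 < fine (mrd d A) /\ exists2 m, fine (mrd d A) / 2 < m & rd_embeddable d A m.
Proof.
move=> mrd_gt0.
have mrd_le1 : (mrd d A <= 1%:E)%E.
  apply: ge_ereal_sup => _ [m [_ [U [V emb]]] <-].
  by rewrite lee_fin; apply: rd_embedding_margin_le1 j i emb.
have mrd_fin : mrd d A \is a fin_num.
  by rewrite ge0_fin_numE ?(ltW mrd_gt0) // (le_lt_trans mrd_le1 (ltry 1)).
have M_gt0 : 0 < fine (mrd d A) by rewrite -lte_fin fineK.
split=> //; have : ((fine (mrd d A) / 2)%:E < mrd d A)%E.
  by rewrite -[X in (_ < X)%E](fineK mrd_fin) lte_fin; lra.
by case/ereal_sup_gt => _ [m [_ emb] <-]; rewrite lte_fin; exists m.
Qed.

Section FfunSums.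
Variables (R : comNzRingType) (I A : finType).

Lemma sum_ffun_app (i : I) (phi : A -> R) :
  \sum_(f : {ffun I -> A}) phi (f i) = #|A|%:R ^+ #|I|.-1 * \sum_a phi a.
Proof.
pose F (i' : I) (a : A) := if i' == i then phi a else 1.
rewrite (eq_bigr (fun f : {ffun I -> A} => \prod_i' F i' (f i'))); last first.
  move=> f _; rewrite (bigD1 i) //= big1 ?mulr1 /F ?eqxx // => i' /negPf -> //.
rewrite -bigA_distr_bigA (bigD1 i) //= mulrC /F eqxx.
rewrite (eq_bigr (fun _ => #|A|%:R)); last first.
  by move=> i' /negPf ->; rewrite sumr_const.
by rewrite prodr_const cardC1.
Qed.

Lemma sum_ffun_app2_eq0 (i i' : I) (phi psi : A -> R) : i != i' ->
  \sum_a phi a = 0 -> \sum_(f : {ffun I -> A}) phi (f i) * psi (f i') = 0.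
Proof.
move=> neq_ii' phi0.
pose F (i'' : I) (a : A) := if i'' == i then phi a else if i'' == i' then psi a else 1.
rewrite (eq_bigr (fun f : {ffun I -> A} => \prod_i'' F i'' (f i''))); last first.
  move=> f _; rewrite (bigD1 i) //= (bigD1 i') 1?eq_sym //= big1 ?mulr1.
    by rewrite /F eqxx eq_sym (negPf neq_ii') eqxx.
  by move=> i'' /andP [/negPf hi /negPf hi']; rewrite /F hi hi'.
rewrite -bigA_distr_bigA (bigD1 i) //= [X in X * _](_ : _ = 0) ?mul0r //.
by apply: etrans phi0; apply: eq_bigr => a _; rewrite /F eqxx.
Qed.

End FfunSums.

Lemma ler_sum_nneg_pred (R : numDomainType) (I : finType) (P : pred I) (F : I -> R) :
  (forall i, 0 <= F i) -> \sum_(i | P i) F i <= \sum_i F i.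
Proof. by move=> F_ge0; rewrite [X in _ <= X](bigID P) /= lerDl sumr_ge0. Qed.

Lemma card_le_card_imset_mul (R : numDomainType) (T C : finType) (h : T -> C)
    (A : {set T}) (b : R) :
  (forall x, x \in A -> #|[set y in A | h y == h x]|%:R <= b) ->
  #|A|%:R <= #|h @: A|%:R * b.
Proof.
move=> fiber_le; rewrite -sum1_card natr_sum (partition_big_imset h) /=.
rewrite mulr_natl -sumr_const; apply: ler_sum => _ /imsetP[x xA ->].
by rewrite -natr_sum sum1dep_card fiber_le.
Qed.

Lemma card_sublevel_ge_half (R : realFieldType) (T : finType) (F : T -> R) (c : R) :
  0 < c -> (forall t, 0 <= F t) -> \sum_t F t <= c * #|T|%:R ->
  (#|T|%:R : R) <= 2 * #|[set t | F t <= 2 * c]|%:R.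
Proof.
move=> c_gt0 F_ge0 sumF; set G := [set t | F t <= 2 * c].
have cardT : (#|T|%:R : R) = #|G|%:R + #|~: G|%:R by rewrite -natrD cardsC.
have highF : #|~: G|%:R * (2 * c) <= \sum_t F t.
  apply: le_trans (ler_sum_nneg_pred (mem (~: G)) F_ge0).
  rewrite -sum1_card natr_sum mulr_suml; apply: ler_sum => t.
  by rewrite !inE -ltNge mul1r => /ltW.
rewrite cardT in sumF *; nra.
Qed.

Definition hamming (I A : finType) (f g : {ffun I -> A}) : nat := \sum_i (f i != g i).

(* Rankin's trick: every g in the ball has weight x ^ (hamming f g - h) >= 1,
   and the total weight of all g factors over the coordinates. *)
Lemma card_hamming_ball_le (R : realFieldType) (I A : finType) (f : {ffun I -> A})
    (h : nat) (x : R) :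
  0 < x <= 1 ->
  #|[set g : {ffun I -> A} | (hamming f g <= h)%N]|%:R
  <= x ^- h * (1 + x * #|A|%:R) ^+ #|I|.
Proof.
case/andP=> x_gt0 x_le1.
have x_ge0 : 0 <= x := ltW x_gt0.
rewrite -sum1_card natr_sum.
apply: le_trans
  (_ : \sum_(g in [set g | (hamming f g <= h)%N]) x ^- h * x ^+ hamming f g <= _).
  apply: ler_sum => g; rewrite inE => hg.
  by rewrite ler_pdivlMl ?exprn_gt0 // mulr1 ler_wiXn2l.
apply: le_trans (_ : \sum_g x ^- h * x ^+ hamming f g <= _).
  by apply: ler_sum_nneg_pred => g; rewrite mulr_ge0 ?invr_ge0 ?exprn_ge0.
rewrite -mulr_sumr ler_pM2l ?invr_gt0 ?exprn_gt0 //.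
under eq_bigr do rewrite /hamming -prodrXr.
rewrite -(bigA_distr_bigA (fun i a => x ^+ (f i != a))) -prodr_const.
apply: ler_prod => i _; rewrite sumr_ge0 => [|a _]; last exact: exprn_ge0.
rewrite (bigD1 (f i)) //= eqxx expr0 lerD2l.
rewrite (eq_bigr (fun _ => x)) => [|a]; last by rewrite eq_sym => ->.
by rewrite sumr_const cardC1 -[_ *+ _]mulr_natr ler_pM2l // ler_nat leq_pred.
Qed.

Lemma sum_div_add_sqr_le (R : realFieldType) (s : R) (B : nat) : 0 < s ->
  \sum_(t < B.+1) s / (s + t%:R ^+ 2) <= 1 + 2 * s.
Proof.
move=> s_gt0.
(* Telescoping: the term of index t >= 1 is at most 2s/t - 2s/(t+1). *)
suff : \sum_(t < B.+1) s / (s + t%:R ^+ 2) <= 1 + 2 * s - 2 * s / B.+1%:R.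
  have : 0 <= 2 * s / B.+1%:R by rewrite divr_ge0 ?mulr_ge0 ?ler0n //; lra.
  by move: (2 * s / _) => q; lra.
elim: B => [|B IH].
  by rewrite big_ord1 /= expr0n /= addr0 divff ?gt_eqF // divr1; lra.
have step : s / (s + B.+1%:R ^+ 2) <= 2 * s / B.+1%:R - 2 * s / B.+2%:R.
  have b_ge1 : 1 <= (B.+1%:R : R) by rewrite ler1n.
  rewrite -[B.+2]addn1 natrD; move: (B.+1%:R : R) b_ge1 => b b_ge1.
  have -> : 2 * s / b - 2 * s / (b + 1) = 2 * s / (b * (b + 1)).
    by field; rewrite !gt_eqF //; lra.
  rewrite ler_pdivrMr; last nra.
  rewrite mulrAC ler_pdivlMr; last nra.
  have : 0 <= s * (b * (b - 1)) by rewrite mulr_ge0 ?mulr_ge0 //; lra.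
  nra.
by rewrite big_ord_recr /=; apply: le_trans (lerD IH step) _; rewrite addrA subrK.
Qed.

(* The weights of all codes factor over the coordinates, while by AM-GM a code
   with sum_r (c r).2 ^ 2 <= d s has weight at least 2 ^- d. *)
Section CodeCount.
Variables (R : realFieldType) (d B : nat) (s : R).
Hypothesis s_gt0 : 0 < s.
Local Notation code := {ffun 'I_d -> bool * 'I_B.+1}.

Definition code_weight (p : bool * 'I_B.+1) : R := s / (s + (p.2 : nat)%:R ^+ 2).

Lemma code_weight_gt0 p : 0 < code_weight p.
Proof. by rewrite divr_gt0 // ltr_pwDl ?sqr_ge0. Qed.

Lemma sum_code_weight_le : \sum_p code_weight p <= 2 * (1 + 2 * s).
Proof.
rewrite -(pair_bigA _ (fun b t => code_weight (b, t))) big_bool /code_weight /=.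
by have := sum_div_add_sqr_le B s_gt0; lra.
Qed.

Lemma prod_code_weight_ge (c : code) :
  \sum_r ((c r).2 : nat)%:R ^+ 2 <= d%:R * s -> 1 <= 2 ^+ d * \prod_r code_weight (c r).
Proof.
move=> sum_sq.
pose E r : R := (s + ((c r).2 : nat)%:R ^+ 2) / s.
have E_gt0 r : 0 < E r by rewrite divr_gt0 // ltr_pwDl ?sqr_ge0.
rewrite (eq_bigr (fun r => (E r)^-1)) => [|r _]; last by rewrite invf_div.
rewrite prodfV ler_pdivlMr ?prodr_gt0 // mul1r.
have := (leif_AGM (A := 'I_d) (E := E) (fun r _ => ltW (E_gt0 r))).1.
rewrite card_ord => /le_trans; apply; apply: lerXn2r; rewrite ?nnegrE //.
  by rewrite divr_ge0 ?sumr_ge0 // => r _; apply: ltW.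
have [d0 | d_gt0] := posnP d.
  by rewrite (_ : d%:R = 0) ?invr0 ?mulr0 // d0.
rewrite ler_pdivrMr ?ltr0n //.
have -> : \sum_(r in 'I_d) E r = d%:R + (\sum_r ((c r).2 : nat)%:R ^+ 2) / s.
  rewrite mulr_suml -[d in d%:R]card_ord -sumr_const -big_split.
  by apply: eq_bigr => r _; rewrite /E mulrDl divff ?gt_eqF.
rewrite -ler_pdivrMr // in sum_sq; lra.
Qed.

Lemma card_codes_le (S : {set code}) :
  (forall c, c \in S -> \sum_r ((c r).2 : nat)%:R ^+ 2 <= d%:R * s) ->
  #|S|%:R <= (4 + 8 * s) ^+ d.
Proof.
move=> S_sq.
have weight_ge0 (c : code) : 0 <= 2 ^+ d * \prod_r code_weight (c r).
  by rewrite mulr_ge0 ?exprn_ge0 ?prodr_ge0 // => r _; apply: ltW (code_weight_gt0 _).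
rewrite -sum1_card natr_sum.
apply: le_trans (_ : \sum_(c in S) 2 ^+ d * \prod_r code_weight (c r) <= _).
  by apply: ler_sum => c /S_sq /prod_code_weight_ge.
apply: le_trans (ler_sum_nneg_pred _ weight_ge0) _.
rewrite -mulr_sumr -(bigA_distr_bigA (fun _ p => code_weight p)) prodr_const card_ord.
have sum_ge0 : 0 <= \sum_p code_weight p.
  by rewrite sumr_ge0 // => p _; apply: ltW (code_weight_gt0 _).
by rewrite -exprMn lerXn2r ?nnegrE; have := sum_code_weight_le; lra.
Qed.

End CodeCount.

Section Floor.
Variable R : archiRealFieldType.
Implicit Types u v : R.

Lemma floor_dist_lt1 u : 0 <= u - (Num.floor u)%:~R < 1.
Proof. by have /andP[] := floor_itv u; rewrite intrD subr_ge0 => -> /=; rewrite ltrBlDl. Qed.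

Lemma floor_eq_sqr_le1 u v : Num.floor u = Num.floor v -> (u - v) ^+ 2 <= 1.
Proof.
move=> eq_uv; have /andP[] := floor_dist_lt1 u; have /andP[] := floor_dist_lt1 v.
rewrite eq_uv; move: (_%:~R) => z *; nra.
Qed.

Lemma floor_sqr_le u : ((Num.floor u)%:~R : R) ^+ 2 <= 2 * u ^+ 2 + 2.
Proof.
have /andP[] := floor_dist_lt1 u; move: (_%:~R) => z t_ge0 t_lt1.
have : (u - z) ^+ 2 <= 1 by nra.
by have := sqr_ge0 (2 * u - z); nra.
Qed.

End Floor.

Section Quantization.
Variables (d : nat) (a : RR).
Hypothesis a_gt0 : 0 < a.
Implicit Types x y : 'I_d -> RR.

Definition qcoord x r : int := Num.floor (x r / a).

Lemma qcoord_eq_sqr_le x y r : qcoord x r = qcoord y r -> (x r - y r) ^+ 2 <= a ^+ 2.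
Proof.
move/floor_eq_sqr_le1 => le1.
have -> : x r - y r = a * (x r / a - y r / a) by field; rewrite gt_eqF.
by rewrite exprMn -[X in _ <= X]mulr1 ler_wpM2l ?sqr_ge0.
Qed.

Lemma sum_qcoord_sqr_le x :
  \sum_r ((qcoord x r)%:~R : RR) ^+ 2 <= 2 * dotp x x / a ^+ 2 + 2 * d%:R.
Proof.
apply: le_trans (ler_sum _ (fun r _ => floor_sqr_le (x r / a))) _.
rewrite big_split /= sumr_const card_ord -[2 *+ d]mulr_natr lerD2r -mulr_sumr -mulrA.
rewrite ler_pM2l // /dotp mulr_suml; apply: ler_sum => r _.
by rewrite expr_div_n expr2.
Qed.

Variable B : nat.

(* [inord] truncates values above B, hence the bound hypotheses below. *)
Definition qcode x : {ffun 'I_d -> bool * 'I_B.+1} :=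
  [ffun r => (qcoord x r < 0, inord `|qcoord x r|)].

Lemma qcode_sqr x r : (`|qcoord x r| <= B)%N ->
  (((qcode x r).2 : nat)%:R : RR) ^+ 2 = (qcoord x r)%:~R ^+ 2.
Proof.
move=> le_B; rewrite ffunE /= inordK ?ltnS //.
by rewrite natr_absz intr_norm real_normK ?num_real.
Qed.

Lemma qcode_eq_qcoord x y :
  (forall r, `|qcoord x r| <= B)%N -> (forall r, `|qcoord y r| <= B)%N ->
  qcode x = qcode y -> qcoord x =1 qcoord y.
Proof.
move=> le_x le_y /ffunP eq_c r; move: (eq_c r); rewrite !ffunE => -[eq_sgn /(congr1 val)].
rewrite /= !inordK ?ltnS ?le_x ?le_y // => eq_abs.
by rewrite [LHS]intEsign [RHS]intEsign eq_sgn eq_abs.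
Qed.

Lemma qcode_eq_dist_le x y :
  (forall r, `|qcoord x r| <= B)%N -> (forall r, `|qcoord y r| <= B)%N ->
  qcode x = qcode y -> dotp (fun r => x r - y r) (fun r => x r - y r) <= d%:R * a ^+ 2.
Proof.
move=> le_x le_y /(qcode_eq_qcoord le_x le_y) eq_q.
rewrite -[d in d%:R]card_ord mulr_natl -sumr_const /dotp; apply: ler_sum => r _.
by rewrite -expr2; apply: qcoord_eq_sqr_le.
Qed.

End Quantization.

Lemma lnMp (x y : RR) : 0 < x -> 0 < y -> ln (x * y) = ln x + ln y.
Proof. by move=> x_gt0 y_gt0; rewrite lnM ?posrE. Qed.

Lemma lnXp (x : RR) (n : nat) : 0 < x -> ln (x ^+ n) = n%:R * ln x.
Proof. by move=> x_gt0; rewrite lnXn // mulr_natl. Qed.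

Lemma ln_le (x y : RR) : 0 < x -> x <= y -> ln x <= ln y.
Proof. by move=> x_gt0 le_xy; rewrite ler_ln ?posrE // (lt_le_trans x_gt0). Qed.

Lemma ln_count_bound (k K d : nat) (N P : RR) :
  (0 < d)%N -> (4 * K <= k)%N -> 3 <= N -> 16 <= P ->
  N ^+ k <= 2 * (P ^+ d * ((4 * N) ^+ K * (5 / 4) ^+ k)) ->
  k%:R * ln N <= 10 * d%:R * ln P.
Proof.
move=> d_gt0 K4_le N_ge3 P_ge16 count.
have [N_gt0 P_gt0] : 0 < N /\ 0 < P by split; lra.
have [two_gt0 four_gt0 q_gt0] : [/\ (0 : RR) < 2, (0 : RR) < 4 & (0 : RR) < 5 / 4].
  by split; lra.
move/(ln_le (exprn_gt0 k N_gt0)) : count.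
have [Pd_gt0 rest_gt0] : 0 < P ^+ d /\ 0 < (4 * N) ^+ K * (5 / 4) ^+ k.
  by split; rewrite ?mulr_gt0 ?exprn_gt0 ?mulr_gt0.
rewrite !lnMp ?mulr_gt0 ?exprn_gt0 ?mulr_gt0 // !lnXp ?mulr_gt0 // lnMp //.
set a := ln N; set b := ln P.
set l2 := ln (2 : RR); set l4 := ln (4 : RR); set l5 := ln (5 / 4 : RR).
have l4E : l4 = 2 * l2 by rewrite /l4 /l2 -lnXp //; congr ln; rewrite expr2; lra.
have l2_ge0 : 0 <= l2 by apply: ln_ge0; lra.
have l5_ge0 : 0 <= l5 by apply: ln_ge0; lra.
have a_ge0 : 0 <= a by apply: ln_ge0; lra.
have l2_le_b : 4 * l2 <= b.
  rewrite /l2 /b -lnXp //; apply: ln_le; first exact: exprn_gt0.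
  by rewrite (_ : 2 ^+ 4 = 16) //; rewrite !exprS expr0; lra.
(* 4^2 (5/4)^8 <= 3^5 <= N^5 absorbs 4^K (5/4)^k into N^(5k/8). *)
have consts_le_a : 2 * l4 + 8 * l5 <= 5 * a.
  rewrite /l4 /l5 /a -!lnXp // -lnMp ?exprn_gt0 //; apply: ln_le.
    by rewrite mulr_gt0 ?exprn_gt0.
  apply: le_trans (_ : 3 ^+ 5 <= _); last by rewrite lerXn2r ?nnegrE //; lra.
  by rewrite !exprS expr0; lra.
have K_le : K%:R * 4 <= (k%:R : RR) by rewrite -natrM ler_nat mulnC.
have d_ge1 : 1 <= (d%:R : RR) by rewrite ler1n.
have K_ge0 : 0 <= (K%:R : RR) := ler0n _ _.
move: (K%:R) (k%:R) (d%:R) K_le d_ge1 K_ge0 => KK kk dd K_le d_ge1 K_ge0 main.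
have kk_ge0 : 0 <= kk by lra.
have K_term : KK * (l4 + a) * 4 <= kk * (l4 + a) by rewrite mulrAC ler_wpM2r //; lra.
have consts_term : kk * (2 * l4 + 8 * l5) <= kk * (5 * a) by rewrite ler_wpM2l.
have b_le : b <= dd * b by rewrite ler_peMl //; lra.
lra.
Qed.

Lemma ln_div_le_2ln_divn (n k : nat) : (0 < k)%N -> (2 * k <= n)%N ->
  ln (n%:R / k%:R : RR) <= 2 * ln (n %/ k)%:R.
Proof.
move=> k_gt0 k2_le_n; set q := (n %/ k)%N.
have q_ge2 : (2 <= q)%N by rewrite leq_divRL.
have n_le : (n <= q ^ 2 * k)%N.
  apply: leq_trans (ltnW (ltn_ceil n k_gt0)) _; rewrite leq_mul2r; apply/orP; right; nia.
rewrite -lnXp ?ltr0n ?(leq_trans _ q_ge2) //; apply: ln_le.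
  by rewrite divr_gt0 ?ltr0n // (leq_trans _ k2_le_n) // muln_gt0.
by rewrite ler_pdivrMr ?ltr0n // -natrX -natrM ler_nat.
Qed.

Lemma ln_1D2_inv_le_2ln (M m s : RR) : 0 < M -> 0 < s -> M / 2 <= m ->
  ln (1 + 2 * (m * s)^-1) <= 2 * ln (1 + 2 * (M * s)^-1).
Proof.
move=> M_gt0 s_gt0 le_m.
have Ms_gt0 : 0 < M / 2 * s by rewrite mulr_gt0 // divr_gt0.
have ms_gt0 : 0 < m * s by rewrite mulr_gt0 //; lra.
have v_le : (m * s)^-1 <= 2 * (M * s)^-1.
  rewrite (_ : 2 * _ = (M / 2 * s)^-1); last by field; rewrite !gt_eqF.
  by rewrite lef_pV2 ?posrE // ler_pM2r.
have v_gt0 : 0 < (m * s)^-1 by rewrite invr_gt0.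
rewrite -lnXp; last lra.
by apply: ln_le; [lra | have := sqr_ge0 (M * s)^-1; lra].
Qed.

Section Blocks.
Variables (n k N : nat).
Hypothesis kN_le_n : (k * N <= n)%N.

Definition block_index (j : 'I_k) (a : 'I_N) : 'I_n := widen_ord kN_le_n (mxvec_index j a).

Lemma block_index_inj j a j' a' : block_index j a = block_index j' a' -> (j, a) = (j', a').
Proof. by move/(congr1 val) => /= /val_inj/enum_rank_inj. Qed.

Definition block_set (f : {ffun 'I_k -> 'I_N}) : {set 'I_n} :=
  [set block_index j (f j) | j : 'I_k].

Lemma card_block_set f : #|block_set f| == k.
Proof. by rewrite card_imset ?card_ord // => j j' /block_index_inj []. Qed.

Definition block_ksub f : ksub n k := exist _ (block_set f) (card_block_set f).

Lemma Snk_block f j a : Snk (block_ksub f) (block_index j a) = (f j == a).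
Proof.
apply/imsetP/eqP => [[j' _ /block_index_inj [-> ->]] // | <-].
by exists j.
Qed.

End Blocks.

(* A margin-m embedding of the product of k copies of S_{N,1}: the row f has its
   ones in the columns (j, f j). *)
Definition block_embedding (k N d : nat) (m : RR)
    (U : {ffun 'I_k -> 'I_N} -> 'I_d -> RR) (W : 'I_k -> 'I_N -> 'I_d -> RR) : Prop :=
  [/\ forall f, unitv (U f), forall j a, unitv (W j a) &
      forall (f : {ffun 'I_k -> 'I_N}) j a,
        if f j == a then m <= dotp (U f) (W j a) else dotp (U f) (W j a) <= - m].

Lemma rd_embedding_block n k N d (kN_le_n : (k * N <= n)%N) m U V :
  rd_embedding (@Snk n k) m U V ->
  @block_embedding k N d m (fun f => U (block_ksub kN_le_n f))
                           (fun j a => V (block_index kN_le_n j a)).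
Proof.
case=> U_unit [V_unit sep]; split=> // f j a.
by have := sep (block_ksub kN_le_n f) (block_index kN_le_n j a); rewrite Snk_block.
Qed.

Section BlockEmbedding.
Variables (k N d : nat) (m : RR).
Variables (U : {ffun 'I_k -> 'I_N} -> 'I_d -> RR) (W : 'I_k -> 'I_N -> 'I_d -> RR).
Hypotheses (k_gt0 : (0 < k)%N) (N_ge3 : (3 <= N)%N) (d_gt0 : (0 < d)%N) (m_gt0 : 0 < m).
Hypothesis embUW : block_embedding m U W.

(* [lra] ignores section hypotheses and [Let]s: proofs copy the ones they need
   into the context first. *)

Let U_unit f : unitv (U f). Proof. by case: embUW. Qed.
Let W_unit j a : unitv (W j a). Proof. by case: embUW. Qed.
Let UW_sep (f : {ffun 'I_k -> 'I_N}) j a :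
  if f j == a then m <= dotp (U f) (W j a) else dotp (U f) (W j a) <= - m.
Proof. by case: embUW. Qed.

Let NR_ge3 : 3 <= (N%:R : RR). Proof. by rewrite (ler_nat _ 3). Qed.
Let NR_neq0 : (N%:R : RR) != 0. Proof. by rewrite pnatr_eq0; lia. Qed.

Definition centered j a : 'I_d -> RR := fun r => W j a r - N%:R^-1 * \sum_b W j b r.

Definition signature (f : {ffun 'I_k -> 'I_N}) : 'I_d -> RR :=
  fun r => \sum_j centered j (f j) r.

Lemma sum_centered j r : \sum_a centered j a r = 0.
Proof. by rewrite sumrB sumr_const card_ord -[_ *+ N]mulr_natl mulrA mulfV // mul1r subrr. Qed.

Lemma sum_centered_sqr_le j r : \sum_a centered j a r ^+ 2 <= \sum_a W j a r ^+ 2.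
Proof.
set c := N%:R^-1 * \sum_b W j b r.
have sumW : \sum_b W j b r = N%:R * c by rewrite mulrA mulfV // mul1r.
have -> : \sum_a centered j a r ^+ 2 = \sum_a W j a r ^+ 2 - N%:R * c ^+ 2.
  transitivity (\sum_a (W j a r ^+ 2 - 2 * c * W j a r + c ^+ 2)).
    by apply: eq_bigr => a _; rewrite /centered -/c; ring.
  rewrite big_split sumrB /= -mulr_sumr sumW sumr_const card_ord -mulr_natl; ring.
by rewrite lerBlDr lerDl mulr_ge0 ?sqr_ge0 ?ler0n.
Qed.

Lemma dotp_centered u j a :
  dotp u (centered j a) = dotp u (W j a) - N%:R^-1 * \sum_b dotp u (W j b).
Proof. by rewrite dotpBr dotpZr dotp_sumr. Qed.

Lemma margin_hamming_le f g :
  2 * m * (hamming f g)%:R <= dotp (U f) (fun r => signature f r - signature g r).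
Proof.
rewrite dotpBr !dotp_sumr -sumrB /hamming natr_sum mulr_sumr; apply: ler_sum => j _.
rewrite !dotp_centered; have := UW_sep f j (f j); rewrite eqxx.
by have := UW_sep f j (g j); case: eqP => [-> | _] /=; lra.
Qed.

Lemma margin_signature_ge f : k%:R * (4 / 3 * m) <= dotp (U f) (signature f).
Proof.
(* With p = <U f, W j (f j)> >= m and the N - 1 other products <= -m, block j
   contributes p - (p + S)/N >= 2m (1 - 1/N) >= 4m/3. *)
have -> : k%:R * (4 / 3 * m) = \sum_(j < k) (4 / 3 * m).
  by rewrite sumr_const card_ord mulr_natl.
rewrite dotp_sumr; apply: ler_sum => j _; rewrite dotp_centered (bigD1 (f j)) //=.
set p := dotp (U f) _; set S := \sum_(a | a != f j) _; set iN := N%:R^-1.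
have p_ge : m <= p by have := UW_sep f j (f j); rewrite eqxx.
have S_le : S <= - m * (N%:R - 1).
  apply: le_trans (_ : \sum_(a | a != f j) - m <= _).
    by apply: ler_sum => a ne_a; have := UW_sep f j a; rewrite eq_sym (negPf ne_a).
  rewrite sumr_const cardC1 card_ord -[_ *+ N.-1]mulr_natr -subn1.
  by rewrite natrB ?(leq_trans _ N_ge3).
have iN_N : iN * N%:R = 1 by rewrite mulVf.
have NR3 := NR_ge3.
have iN_gt0 : 0 < iN by rewrite invr_gt0; lra.
have iN_le : iN <= 1 / 3 by rewrite -[iN]mul1r ler_pdivrMr; lra.
have S_scaled : iN * S <= - m + m * iN.
  apply: le_trans (ler_wpM2l (ltW iN_gt0) S_le) _.
  by rewrite mulrCA mulrBr iN_N; lra.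
have p_scaled : (1 - iN) * m <= (1 - iN) * p by rewrite ler_wpM2l //; lra.
have : m * iN <= m / 3 by rewrite ler_pM2l //; lra.
lra.
Qed.

(* The cross terms between distinct blocks vanish since each centred block sums to 0. *)
Lemma sum_signature_sqr :
  \sum_f dotp (signature f) (signature f)
  = N%:R ^+ k.-1 * \sum_r \sum_j \sum_a centered j a r ^+ 2.
Proof.
rewrite /dotp exchange_big mulr_sumr; apply: eq_bigr => r _.
rewrite mulr_sumr; under eq_bigr do rewrite /signature big_distrlr /=.
rewrite exchange_big; apply: eq_bigr => j _ /=.
rewrite exchange_big (bigD1 j) //= [X in _ + X]big1 ?addr0 => [|j' ne_j'].
  under eq_bigr do rewrite -expr2.
  by apply: etrans (sum_ffun_app j (fun a => centered j a r ^+ 2)) _; rewrite !card_ord.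
apply: (sum_ffun_app2_eq0 (fun a => centered j' a r) (phi := fun a => centered j a r)).
  by rewrite eq_sym.
exact: sum_centered.
Qed.

Lemma sum_signature_sqr_le : \sum_f dotp (signature f) (signature f) <= k%:R * N%:R ^+ k.
Proof.
have NkE : N%:R ^+ k = N%:R ^+ k.-1 * N%:R :> RR by rewrite -exprSr prednK.
rewrite sum_signature_sqr NkE mulrCA ler_wpM2l ?exprn_ge0 ?ler0n //.
apply: le_trans (_ : \sum_r \sum_j \sum_a W j a r ^+ 2 <= _).
  by do 2![apply: ler_sum => ? _]; apply: sum_centered_sqr_le.
rewrite exchange_big /= (eq_bigr (fun _ => N%:R)) => [|j _].
  by rewrite sumr_const card_ord mulr_natl.
rewrite exchange_big /= -[N in N%:R]card_ord -sumr_const; apply: eq_bigr => a _.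
by rewrite -(W_unit j a); apply: eq_bigr => r _; rewrite expr2.
Qed.

Lemma margin_sqr_le : k%:R * m ^+ 2 <= 9 / 16.
Proof.
have kR_gt0 : 0 < (k%:R : RR) by rewrite ltr0n.
have m_pos := m_gt0.
have bound_ge0 : 0 <= k%:R * (4 / 3 * m) by apply: mulr_ge0; lra.
have signature_ge f : (k%:R * (4 / 3 * m)) ^+ 2 <= dotp (signature f) (signature f).
  apply: le_trans (unitv_dotp_sqr_le _ (U_unit f)).
  rewrite ler_sqr ?nnegrE ?margin_signature_ge //.
  exact: le_trans bound_ge0 (margin_signature_ge f).
have := le_trans (ler_sum _ (fun f _ => signature_ge f)) sum_signature_sqr_le.
rewrite sumr_const -[_ *+ _]mulr_natr card_ffun !card_ord natrX.
have NR3 := NR_ge3.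
rewrite ler_pM2r ?exprn_gt0 //; last lra.
rewrite exprMn expr2 -mulrA -[X in _ <= X]mulr1 ler_pM2l //; lra.
Qed.

Definition typical : {set {ffun 'I_k -> 'I_N}} :=
  [set f | dotp (signature f) (signature f) <= 2 * k%:R].

Lemma card_typical_ge : (N%:R : RR) ^+ k <= 2 * #|typical|%:R.
Proof.
have := card_sublevel_ge_half (F := fun f => dotp (signature f) (signature f)) (c := k%:R).
rewrite card_ffun !card_ord natrX ltr0n.
by apply=> // [f|]; [exact: dotp_ge0 | exact: sum_signature_sqr_le].
Qed.

Definition scale : RR := k%:R * m / (2 * Num.sqrt d%:R).

Lemma scale_gt0 : 0 < scale.
Proof. by rewrite divr_gt0 ?mulr_gt0 ?ltr0n ?sqrtr_gt0 ?ltr0n. Qed.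

Lemma d_scale_sqr : d%:R * scale ^+ 2 = (k%:R * m) ^+ 2 / 4.
Proof.
have sqrt_gt0 : 0 < Num.sqrt (d%:R : RR) by rewrite sqrtr_gt0 ltr0n.
rewrite /scale; set s := Num.sqrt _ in sqrt_gt0 *.
rewrite -(sqr_sqrtr (ler0n RR d)) -/s; field.
by rewrite gt_eqF.
Qed.

Definition code_bound : nat :=
  \max_(f : {ffun 'I_k -> 'I_N}) \max_(r < d) `|qcoord scale (signature f) r|%N.

Lemma qcoord_signature_le f r : (`|qcoord scale (signature f) r| <= code_bound)%N.
Proof.
apply: leq_trans (leq_bigmax (F := fun r => `|qcoord scale (signature f) r|%N) r) _.
exact: (leq_bigmax (F := fun f => \max_(r < d) `|qcoord scale (signature f) r|%N) f).
Qed.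

Definition signature_code f := qcode scale code_bound (signature f).

Lemma hamming_le_of_code_eq f g :
  signature_code f = signature_code g -> (4 * hamming f g <= k)%N.
Proof.
move=> eq_code; have m_pos := m_gt0.
have := qcode_eq_dist_le scale_gt0 (qcoord_signature_le f) (qcoord_signature_le g) eq_code.
rewrite d_scale_sqr => dist_le.
have := unitv_dotp_sqr_le (fun r => signature f r - signature g r) (U_unit f).
have := margin_hamming_le f g.
set h := (hamming f g)%:R; set p := dotp _ _ => p_ge p_sqr.
have h_ge0 : 0 <= h := ler0n _ _.
have : (2 * m * h) ^+ 2 <= (k%:R * m) ^+ 2 / 4.
  apply: le_trans dist_le; apply: le_trans p_sqr.
  by rewrite ler_sqr ?nnegrE // ?(le_trans _ p_ge) // mulr_ge0 ?mulr_ge0 //; lra.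
rewrite -(ler_nat RR) natrM -/h -ler_sqr ?nnegrE ?mulr_ge0 ?ler0n //.
move=> le_sqr; rewrite -(ler_pM2l (exprn_gt0 2 m_gt0)); lra.
Qed.

Definition sigma : RR := 16 / (k%:R * m ^+ 2) + 2.

Lemma sigma_ge2 : 2 <= sigma.
Proof.
have : 0 <= 16 / (k%:R * m ^+ 2) by rewrite divr_ge0 // mulr_ge0 ?ler0n ?sqr_ge0.
by rewrite /sigma; lra.
Qed.

Lemma code_sqr_le f : f \in typical ->
  \sum_r ((signature_code f r).2 : nat)%:R ^+ 2 <= d%:R * sigma.
Proof.
rewrite inE => typ_f.
rewrite (eq_bigr _ (fun r _ => qcode_sqr (qcoord_signature_le f r))).
apply: le_trans (sum_qcoord_sqr_le scale (signature f)) _.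
have scale_sqr : scale ^+ 2 = (k%:R * m) ^+ 2 / 4 / d%:R.
  by rewrite -d_scale_sqr mulrAC mulfV ?mul1r // pnatr_eq0 -lt0n.
have [k_neq0 d_neq0 m_neq0] : [/\ (k%:R : RR) != 0, (d%:R : RR) != 0 & m != 0].
  by rewrite !pnatr_eq0 -!lt0n gt_eqF.
set c := 8 * d%:R / (k%:R * m) ^+ 2.
have -> : 2 * dotp (signature f) (signature f) / scale ^+ 2
          = c * dotp (signature f) (signature f).
  by rewrite scale_sqr /c; field; rewrite k_neq0 d_neq0 m_neq0.
have -> : d%:R * sigma = c * (2 * k%:R) + 2 * d%:R.
  by rewrite /sigma /c; field; rewrite k_neq0 m_neq0.
by rewrite lerD2r ler_wpM2l // divr_ge0 ?sqr_ge0 // mulr_ge0 ?ler0n.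
Qed.

Lemma card_typical_codes_le : #|signature_code @: typical|%:R <= (4 + 8 * sigma) ^+ d.
Proof.
have sigma_gt0 : 0 < sigma by apply: lt_le_trans sigma_ge2.
apply: (card_codes_le sigma_gt0) => _ /imsetP[f typ_f ->]; exact: code_sqr_le.
Qed.

Lemma card_fiber_le f :
  #|[set g in typical | signature_code g == signature_code f]|%:R
  <= (4 * N%:R : RR) ^+ (k %/ 4) * (5 / 4) ^+ k.
Proof.
have NR3 := NR_ge3.
have x_in01 : 0 < (4 * N%:R : RR)^-1 <= 1.
  by rewrite invr_gt0 invf_le1; lra.
apply: le_trans (_ : #|[set g | (hamming f g <= k %/ 4)%N]|%:R <= _).
  rewrite ler_nat; apply: subset_leq_card; apply/fintype.subsetP => g.
  rewrite !inE => /andP[_ /eqP eq_code].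
  by rewrite leq_divRL // mulnC hamming_le_of_code_eq.
apply: le_trans (card_hamming_ball_le f (k %/ 4) x_in01) _.
rewrite -exprVn invrK !card_ord (_ : 1 + _ * N%:R = 5 / 4) //.
by field; rewrite NR_neq0.
Qed.

Lemma blocks_count_le :
  (N%:R : RR) ^+ k <= 2 * ((4 + 8 * sigma) ^+ d * ((4 * N%:R) ^+ (k %/ 4) * (5 / 4) ^+ k)).
Proof.
apply: le_trans card_typical_ge _; rewrite ler_pM2l //.
apply: le_trans (card_le_card_imset_mul (fun f _ => card_fiber_le f)) _.
by rewrite ler_wpM2r ?mulr_ge0 ?exprn_ge0 ?card_typical_codes_le //; lra.
Qed.

Lemma four_add_8sigma_le : 4 + 8 * sigma <= (1 + 2 * (m * Num.sqrt k%:R)^-1) ^+ 8.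
Proof.
have m_pos := m_gt0.
have sqrt_gt0 : 0 < Num.sqrt (k%:R : RR) by rewrite sqrtr_gt0 ltr0n.
set u := (m * Num.sqrt k%:R)^-1.
have u_gt0 : 0 < u by rewrite invr_gt0 mulr_gt0.
have u_sqr : u ^+ 2 = (k%:R * m ^+ 2)^-1 by rewrite exprVn exprMn sqr_sqrtr ?ler0n // mulrC.
have u_sqr_ge1 : 1 <= u ^+ 2.
  rewrite u_sqr invf_ge1 ?mulr_gt0 ?exprn_gt0 ?ltr0n //.
  by have := margin_sqr_le; lra.
have u_ge1 : 1 <= u by nra.
have u8_ge : u ^+ 2 <= u ^+ 8 by apply: ler_weXn2l.
have : (2 * u) ^+ 8 <= (1 + 2 * u) ^+ 8 by rewrite lerXn2r ?nnegrE; lra.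
rewrite /sigma -u_sqr exprMn; lra.
Qed.

Theorem block_embedding_dim_ge :
  k%:R * ln N%:R <= 80 * d%:R * ln (1 + 2 * (m * Num.sqrt k%:R)^-1).
Proof.
have P_ge16 : 16 <= 4 + 8 * sigma by have := sigma_ge2; lra.
have K_le : (4 * (k %/ 4) <= k)%N by rewrite mulnC leq_divM.
apply: le_trans (ln_count_bound d_gt0 K_le NR_ge3 P_ge16 blocks_count_le) _.
have u_gt0 : 0 < (m * Num.sqrt k%:R)^-1 by rewrite invr_gt0 mulr_gt0 ?sqrtr_gt0 ?ltr0n.
have ln_P : ln (4 + 8 * sigma) <= 8 * ln (1 + 2 * (m * Num.sqrt k%:R)^-1).
  by rewrite -lnXp; [apply: ln_le four_add_8sigma_le | ]; lra.
by have := ler_wpM2l (ler0n RR d) ln_P; lra.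
Qed.

End BlockEmbedding.

Theorem theorem1p5 :
  exists C : RR, 0 < C /\
    forall n k d : nat, (0 < n)%N -> (0 < k)%N -> (0 < d)%N -> (3 * k <= n)%N ->
      (0 < mrd d (@Snk n k))%E ->
      C * (k%:R * ln (n%:R / k%:R))
        / ln (1 + 2 * (fine (mrd d (@Snk n k)) * Num.sqrt (k%:R))^-1)
      <= d%:R.
Proof.
exists (1 / 320); split=> [|n k d n_gt0 k_gt0 d_gt0 k3_le_n mrd_gt0]; first lra.
set N := (n %/ k)%N.
have N_ge3 : (3 <= N)%N by rewrite leq_divRL.
have kN_le_n : (k * N <= n)%N by rewrite mulnC leq_divM.
pose row : ksub n k := block_ksub kN_le_n [ffun=> Ordinal (leq_trans (ltn0Sn 2) N_ge3)].
have [M_gt0 [m M_lt [U [V emb]]]] := mrd_gt0_embeddable row (Ordinal n_gt0) mrd_gt0.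
set M := fine _ in M_gt0 M_lt *.
have m_gt0 : 0 < m by lra.
have dim_ge := block_embedding_dim_ge k_gt0 N_ge3 d_gt0 m_gt0 (rd_embedding_block kN_le_n emb).
have k2_le_n : (2 * k <= n)%N by apply: leq_trans k3_le_n; rewrite leq_mul2r orbT.
have ln_nk := ln_div_le_2ln_divn k_gt0 k2_le_n.
have sqrt_gt0 : 0 < Num.sqrt (k%:R : RR) by rewrite sqrtr_gt0 ltr0n.
have ln_m := ln_1D2_inv_le_2ln M_gt0 sqrt_gt0 (ltW M_lt).
have L_gt0 : 0 < ln (1 + 2 * (M * Num.sqrt k%:R)^-1).
  by rewrite ln_gt0 // ltrDl mulr_gt0 // invr_gt0 mulr_gt0.
rewrite ler_pdivrMr //.
have := ler_wpM2l (ler0n RR k) ln_nk; have := ler_wpM2l (ler0n RR d) ln_m.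
lra.
Qed.
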